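(* Let $m\geq 2$ be an integer and $m<p<2m$. For every $n\geq1$ and every $m$-homogeneous polynomial $P:\ell_p^n\to\mathbb{K}$, $P(x_1,\ldots,x_n)=\sum_{|\alpha|=m}a_\alpha\mathbf{x}^\alpha$, we have \[ \Big(\sum_{|\alpha|=m}|a_\alpha|^{\frac{p}{p-m}}\Big)^{\frac{p-m}{p}}\leq C^{\mathrm{mult}}_{\mathbb{K},m,p}\,\frac{m^m}{(m!)^{\frac{p-m}{p}}}\,\|P\|. \] In particular, the optimal constant $C^{\mathrm{pol}}_{\mathbb{K},m,p}$ (the smallest constant $C$ such that $\big(\sum_{|\alpha|=m}|a_\alpha|^{p/(p-m)}\big)^{(p-m)/p}\le C\|P\|$ for all such $P$ and all $n$) satisfies $C^{\mathrm{pol}}_{\mathbb{K},m,p}\leq C^{\mathrm{mult}}_{\mathbb{K},m,p}\frac{m^m}{(m!)^{(p-m)/p}}$.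
   Context: $\mathbb{K}$ denotes $\mathbb{R}$ or $\mathbb{C}$. For a multi-index $\alpha=(\alpha_1,\ldots,\alpha_n)\in\mathbb{N}^n$ (entries nonnegative integers), $|\alpha|=\alpha_1+\cdots+\alpha_n$ and $\mathbf{x}^\alpha=x_1^{\alpha_1}\cdots x_n^{\alpha_n}$. $\ell_p^n$ is $\mathbb{K}^n$ with the $p$-norm. For a polynomial $P$ on $\ell_p^n$, $\|P\|=\sup\{|P(x)|:\|x\|_p\le1\}$; for an $m$-linear form $T:\ell_p^n\times\cdots\times\ell_p^n\to\mathbb{K}$, $\|T\|=\sup\{|T(x^{(1)},\ldots,x^{(m)})|:\|x^{(i)}\|_p\le1\}$. $e_j$ denotes the canonical unit vectors. For $m<p<2m$, $C^{\mathrm{mult}}_{\mathbb{K},m,p}$ denotes the smallest constant $C$ such that $\big(\sum_{j_1,\ldots,j_m=1}^n|T(e_{j_1},\ldots,e_{j_m})|^{\frac{p}{p-m}}\big)^{\frac{p-m}{p}}\le C\|T\|$ for all $m$-linear forms $T:\ell_p^n\times\cdots\times\ell_p^n\to\mathbb{K}$ and all $n\ge1$ (this constant is known to be finite, at most $(\sqrt2)^{m-1}$). *)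

From Stdlib Require Import Reals Lra List Arith.
Import ListNotations.
Open Scope R_scope.

(* ---------- Scalars: K = R or C, both embedded in a minimal complex type ---------- *)
Record Cx := mkC { Re : R; Im : R }.
Definition C0 : Cx := mkC 0 0.
Definition C1 : Cx := mkC 1 0.
Definition Cadd (z w : Cx) : Cx := mkC (Re z + Re w) (Im z + Im w).
Definition Cmul (z w : Cx) : Cx :=
  mkC (Re z * Re w - Im z * Im w) (Re z * Im w + Im z * Re w).
Definition Cabs (z : Cx) : R := sqrt (Re z * Re z + Im z * Im z).
Fixpoint Cpow (z : Cx) (k : nat) : Cx :=
  match k with O => C1 | S k' => Cmul z (Cpow z k') end.
Definition Csum {A : Type} (f : A -> Cx) (l : list A) : Cx :=
  fold_right (fun a acc => Cadd (f a) acc) C0 l.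
Definition Rsum {A : Type} (f : A -> R) (l : list A) : R :=
  fold_right (fun a acc => f a + acc) 0 l.

Inductive field_kind := RealK | ComplexK.
Definition inK (K : field_kind) (z : Cx) : Prop :=
  match K with RealK => Im z = 0 | ComplexK => True end.

(* Real power x^y for x >= 0 (with 0^y = 0, y > 0). *)
Definition rpow (x y : R) : R := if Rlt_dec 0 x then Rpower x y else 0.

(* ---------- Vectors of K^n: functions nat -> Cx supported on {0,...,n-1} ---------- *)
Definition vec := nat -> Cx.
Definition isvec (K : field_kind) (n : nat) (x : vec) : Prop :=
  (forall j, (j < n)%nat -> inK K (x j)) /\ (forall j, (n <= j)%nat -> x j = C0).
Definition vadd (x y : vec) : vec := fun j => Cadd (x j) (y j).
Definition vscal (c : Cx) (x : vec) : vec := fun j => Cmul c (x j).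

Definition lp_norm (p : R) (n : nat) (x : vec) : R :=
  rpow (Rsum (fun j => rpow (Cabs (x j)) p) (seq 0 n)) (1 / p).

(* canonical unit vector e_j (0-based index) *)
Definition unitv (j : nat) : vec := fun k => if Nat.eqb k j then C1 else C0.

Definition mlinear (K : field_kind) (n m : nat) (T : list vec -> Cx) : Prop :=
  (forall X, length X = m -> (forall x, In x X -> isvec K n x) -> inK K (T X)) /\
  (forall l1 l2 y z c,
      (length l1 + S (length l2) = m)%nat ->
      (forall x, In x l1 -> isvec K n x) -> (forall x, In x l2 -> isvec K n x) ->
      isvec K n y -> isvec K n z -> inK K c ->
      T (l1 ++ vadd (vscal c y) z :: l2) =
        Cadd (Cmul c (T (l1 ++ y :: l2))) (T (l1 ++ z :: l2))).

(* M is an upper bound of |T| on the product of unit balls (so ||T|| <= M) *)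
Definition mlin_bound (K : field_kind) (n m : nat) (p : R) (T : list vec -> Cx) (M : R) : Prop :=
  forall X, length X = m -> (forall x, In x X -> isvec K n x /\ lp_norm p n x <= 1) ->
    Cabs (T X) <= M.

Fixpoint tuples (n m : nat) : list (list nat) :=
  match m with
  | O => [[]]
  | S m' => flat_map (fun j => map (cons j) (tuples n m')) (seq 0 n)
  end.

(* C is an admissible constant in the multilinear inequality (for all n >= 1, all T);
   C^mult_{K,m,p} is the least such constant. *)
Definition mult_admissible (K : field_kind) (m : nat) (p C : R) : Prop :=
  forall (n : nat) (T : list vec -> Cx) (M : R),
    (1 <= n)%nat -> mlinear K n m T -> mlin_bound K n m p T M ->
    rpow (Rsum (fun js => rpow (Cabs (T (map unitv js))) (p / (p - INR m))) (tuples n m))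
         ((p - INR m) / p) <= C * M.

Fixpoint multi (n m : nat) : list (list nat) :=
  match n with
  | O => match m with O => [[]] | S _ => [] end
  | S n' => flat_map (fun k => map (cons k) (multi n' (m - k))) (seq 0 (S m))
  end.

Fixpoint monom_from (i : nat) (alpha : list nat) (x : vec) : Cx :=
  match alpha with
  | [] => C1
  | k :: rest => Cmul (Cpow (x i) k) (monom_from (S i) rest x)
  end.
Definition monom (alpha : list nat) (x : vec) : Cx := monom_from 0 alpha x.

Definition poly_eval (n m : nat) (a : list nat -> Cx) (x : vec) : Cx :=
  Csum (fun alpha => Cmul (a alpha) (monom alpha x)) (multi n m).

(* M is an upper bound of |P| on the unit ball of l_p^n (so ||P|| <= M) *)
Definition poly_bound (K : field_kind) (n : nat) (p : R) (P : vec -> Cx) (M : R) : Prop :=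
  forall x, isvec K n x -> lp_norm p n x <= 1 -> Cabs (P x) <= M.

From Stdlib Require Import Reals Lra Lia List Arith Permutation
  FunctionalExtensionality ClassicalEpsilon Classical.
Import ListNotations.
Open Scope R_scope.

(** Let [T] be the symmetric [m]-linear form with [T(x, ..., x) = P(x)]; on unit vectors,
    [T(e_(j_1), ..., e_(j_m)) = a_alpha / N(alpha)], where [alpha] is the multiplicity vector of
    [(j_1, ..., j_m)] and [N(alpha) <= m!] is the number of tuples with that multiplicity vector.
    The polarization formula
    [2 ^ m m! T(x_1, ..., x_m) = sum_(eps in {-1,1}^m) eps_1 ... eps_m P(sum_i eps_i x_i)]
    together with [||(eps_1 x_1 + ... + eps_m x_m) / m||_p <= 1] (convexity of [t |-> t ^ p])
    gives [||T|| <= m ^ m / m! ||P||].  Applying the multilinear inequality to [T], its left-hand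
    side is [sum_alpha N(alpha) ^ (1 - q) |a_alpha| ^ q >= (m!) ^ (1 - q) sum_alpha |a_alpha| ^ q]
    with [q = p / (p - m) >= 1], which is the claim. *)

Lemma Cx_ext z w : Re z = Re w -> Im z = Im w -> z = w.
Proof. destruct z, w; simpl; intros; subst; reflexivity. Qed.

Definition Copp z := mkC (- Re z) (- Im z).
Definition Csub z w := Cadd z (Copp w).

Lemma Cx_ring : ring_theory C0 C1 Cadd Cmul Csub Copp (@eq Cx).
Proof.
  constructor; intros; apply Cx_ext; unfold Cadd, Cmul, Csub, Copp, C0, C1; simpl; ring.
Qed.
Add Ring Cx_ring : Cx_ring.

Definition Cr (r : R) : Cx := mkC r 0.

Lemma Cr_add a b : Cr (a + b) = Cadd (Cr a) (Cr b).
Proof. apply Cx_ext; unfold Cr, Cadd; simpl; ring. Qed.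
Lemma Cr_mul a b : Cr (a * b) = Cmul (Cr a) (Cr b).
Proof. apply Cx_ext; unfold Cr, Cmul; simpl; ring. Qed.
Lemma Cr0 : Cr 0 = C0. Proof. reflexivity. Qed.
Lemma Cr1 : Cr 1 = C1. Proof. reflexivity. Qed.

Lemma Cr_mul_inv r z : r <> 0 -> Cmul (Cr r) (Cmul (Cr (/ r)) z) = z.
Proof.
  intros Hr. transitivity (Cmul (Cr (r * / r)) z); [rewrite Cr_mul; ring|].
  rewrite Rinv_r, Cr1 by exact Hr. ring.
Qed.

Lemma Cpow_Cr r k : Cpow (Cr r) k = Cr (r ^ k).
Proof. induction k; simpl; auto. rewrite IHk, Cr_mul; auto. Qed.
Lemma Cpow_C1 k : Cpow C1 k = C1.
Proof. rewrite <- Cr1, Cpow_Cr, pow1. reflexivity. Qed.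

Lemma Cabs_ge0 z : 0 <= Cabs z.
Proof. apply sqrt_pos. Qed.
Lemma Cabs_Cr r : Cabs (Cr r) = Rabs r.
Proof. unfold Cabs, Cr; simpl. rewrite Rmult_0_l, Rplus_0_r. apply sqrt_Rsqr_abs. Qed.
Lemma Cabs_C0 : Cabs C0 = 0.
Proof. rewrite <- Cr0, Cabs_Cr, Rabs_R0; reflexivity. Qed.
Lemma Cabs_C1 : Cabs C1 = 1.
Proof. rewrite <- Cr1, Cabs_Cr, Rabs_R1; reflexivity. Qed.

Lemma Cabs_mul z w : Cabs (Cmul z w) = Cabs z * Cabs w.
Proof.
  destruct z as [a b], w as [c d]; unfold Cabs, Cmul; simpl.
  rewrite <- sqrt_mult by nra. f_equal; ring.
Qed.

Lemma Cabs_add z w : Cabs (Cadd z w) <= Cabs z + Cabs w.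
Proof.
  destruct z as [a b], w as [c d]; unfold Cabs, Cadd; simpl.
  set (u := a * a + b * b); set (v := c * c + d * d).
  assert (Hu : 0 <= u) by (unfold u; nra). assert (Hv : 0 <= v) by (unfold v; nra).
  assert (HCS : a * c + b * d <= sqrt u * sqrt v).
  { rewrite <- sqrt_mult by assumption.
    destruct (Rle_or_lt (a * c + b * d) 0); [pose proof (sqrt_pos (u * v)); lra|].
    apply Rsqr_incr_0_var; [|apply sqrt_pos]. unfold Rsqr.
    rewrite sqrt_sqrt by (apply Rmult_le_pos; assumption). unfold u, v.
    pose proof (Rle_0_sqr (a * d - b * c)). unfold Rsqr in *; nra. }
  pose proof (sqrt_pos u); pose proof (sqrt_pos v).
  apply Rsqr_incr_0_var; [|lra]. unfold Rsqr.
  rewrite (sqrt_sqrt ((a + c) * (a + c) + (b + d) * (b + d)))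
    by (pose proof (Rle_0_sqr (a + c)); pose proof (Rle_0_sqr (b + d)); unfold Rsqr in *; lra).
  replace ((sqrt u + sqrt v) * (sqrt u + sqrt v))
    with (sqrt u * sqrt u + sqrt v * sqrt v + 2 * (sqrt u * sqrt v)) by ring.
  rewrite !sqrt_sqrt by assumption. unfold u, v in *. nra.
Qed.

Lemma Im_add z w : Im z = 0 -> Im w = 0 -> Im (Cadd z w) = 0.
Proof. unfold Cadd; simpl; lra. Qed.
Lemma Im_mul z w : Im z = 0 -> Im w = 0 -> Im (Cmul z w) = 0.
Proof. unfold Cmul; simpl; intros -> ->; ring. Qed.

Section Sums.
Context {A : Type}.

Lemma Csum_app (f : A -> Cx) l1 l2 : Csum f (l1 ++ l2) = Cadd (Csum f l1) (Csum f l2).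
Proof. induction l1; unfold Csum in *; simpl. ring. rewrite IHl1. ring. Qed.
Lemma Csum_ext_in (f g : A -> Cx) l : (forall x, In x l -> f x = g x) -> Csum f l = Csum g l.
Proof.
  induction l; intros H; unfold Csum in *; simpl; auto.
  rewrite H by (left; auto). rewrite IHl; auto. intros; apply H; right; auto.
Qed.
Lemma Csum_add (f g : A -> Cx) l :
  Csum (fun x => Cadd (f x) (g x)) l = Cadd (Csum f l) (Csum g l).
Proof. induction l; unfold Csum in *; simpl. apply Cx_ext; simpl; ring. rewrite IHl. ring. Qed.
Lemma Csum_mul_l c (f : A -> Cx) l : Cmul c (Csum f l) = Csum (fun x => Cmul c (f x)) l.
Proof. induction l; unfold Csum in *; simpl. apply Cx_ext; simpl; ring. rewrite <- IHl. ring. Qed.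
Lemma Csum_mul_r c (f : A -> Cx) l : Cmul (Csum f l) c = Csum (fun x => Cmul (f x) c) l.
Proof. induction l; unfold Csum in *; simpl. apply Cx_ext; simpl; ring. rewrite <- IHl. ring. Qed.
Lemma Csum_zero (l : list A) : Csum (fun _ => C0) l = C0.
Proof. induction l; unfold Csum in *; simpl; auto. rewrite IHl; ring. Qed.
Lemma Csum_const c (l : list A) : Csum (fun _ => c) l = Cmul (Cr (INR (length l))) c.
Proof.
  induction l; simpl length. apply Cx_ext; simpl; ring.
  rewrite S_INR. unfold Csum in *; simpl. rewrite IHl, Cr_add, Cr1; ring.
Qed.
Lemma Csum_filter (f : A -> Cx) (p : A -> bool) l :
  Csum f (filter p l) = Csum (fun x => if p x then f x else C0) l.
Proof. induction l; unfold Csum in *; simpl; auto. destruct (p a); simpl; rewrite IHl; ring. Qed.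
Lemma Cabs_Csum (f : A -> Cx) l : Cabs (Csum f l) <= Rsum (fun x => Cabs (f x)) l.
Proof.
  induction l; unfold Csum, Rsum in *; simpl. rewrite Cabs_C0; lra.
  eapply Rle_trans. apply Cabs_add. lra.
Qed.
Lemma Csum_Cr (f : A -> R) l : Csum (fun x => Cr (f x)) l = Cr (Rsum f l).
Proof. induction l; unfold Csum, Rsum in *; simpl; auto. rewrite IHl, Cr_add; auto. Qed.
Lemma Im_Csum (f : A -> Cx) l : (forall x, In x l -> Im (f x) = 0) -> Im (Csum f l) = 0.
Proof.
  induction l; intros H; unfold Csum in *; simpl; auto.
  apply Im_add. apply H; left; auto. apply IHl; intros; apply H; right; auto.
Qed.

Lemma Rsum_ext_in (f g : A -> R) l : (forall x, In x l -> f x = g x) -> Rsum f l = Rsum g l.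
Proof.
  induction l; intros H; unfold Rsum in *; simpl; auto.
  rewrite H by (left; auto). rewrite IHl; auto. intros; apply H; right; auto.
Qed.
Lemma Rsum_le (f g : A -> R) l : (forall x, In x l -> f x <= g x) -> Rsum f l <= Rsum g l.
Proof.
  induction l; intros H; unfold Rsum in *; simpl. lra.
  apply Rplus_le_compat. apply H; left; auto. apply IHl; intros; apply H; right; auto.
Qed.
Lemma Rsum_nonneg (f : A -> R) l : (forall x, In x l -> 0 <= f x) -> 0 <= Rsum f l.
Proof.
  induction l; intros H; unfold Rsum in *; simpl. lra.
  apply Rplus_le_le_0_compat. apply H; left; auto. apply IHl; intros; apply H; right; auto.
Qed.
Lemma Rsum_mul_l c (f : A -> R) l : c * Rsum f l = Rsum (fun x => c * f x) l.
Proof. induction l; unfold Rsum in *; simpl. ring. rewrite <- IHl. ring. Qed.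
Lemma Rsum_add (f g : A -> R) l : Rsum (fun x => f x + g x) l = Rsum f l + Rsum g l.
Proof. induction l; unfold Rsum in *; simpl. ring. rewrite IHl. ring. Qed.
Lemma Rsum_const c (l : list A) : Rsum (fun _ => c) l = INR (length l) * c.
Proof.
  induction l; simpl length. simpl; ring.
  rewrite S_INR. unfold Rsum in *; simpl. rewrite IHl. ring.
Qed.

End Sums.

Lemma Csum_map {A B} (f : B -> Cx) (g : A -> B) l :
  Csum f (map g l) = Csum (fun x => f (g x)) l.
Proof. induction l; unfold Csum in *; simpl; auto. rewrite IHl; auto. Qed.
Lemma Csum_flat_map {A B} (f : B -> Cx) (g : A -> list B) l :
  Csum f (flat_map g l) = Csum (fun x => Csum f (g x)) l.
Proof. induction l; simpl; auto. rewrite Csum_app, IHl; auto. Qed.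
Lemma Csum_swap {A B} (f : A -> B -> Cx) l1 l2 :
  Csum (fun x => Csum (fun y => f x y) l2) l1 = Csum (fun y => Csum (fun x => f x y) l1) l2.
Proof.
  induction l1; unfold Csum at 1 3; simpl. symmetry; apply Csum_zero.
  fold (Csum (fun x => Csum (fun y => f x y) l2) l1). rewrite IHl1, <- Csum_add.
  apply Csum_ext_in; reflexivity.
Qed.
Lemma Rsum_swap {A B} (f : A -> B -> R) l1 l2 :
  Rsum (fun x => Rsum (fun y => f x y) l2) l1 = Rsum (fun y => Rsum (fun x => f x y) l1) l2.
Proof.
  induction l1.
  - rewrite (Rsum_ext_in (fun y => Rsum (fun x => f x y) []) (fun _ => 0)), Rsum_const
      by reflexivity.
    simpl; ring.
  - unfold Rsum at 1; simpl; fold (Rsum (fun x => Rsum (fun y => f x y) l2) l1).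
    rewrite IHl1, <- Rsum_add. apply Rsum_ext_in; reflexivity.
Qed.

Definition prodl (f : nat -> Cx) (l : list nat) : Cx :=
  fold_right (fun j acc => Cmul (f j) acc) C1 l.

Lemma prodl_app f l1 l2 : prodl f (l1 ++ l2) = Cmul (prodl f l1) (prodl f l2).
Proof. induction l1; unfold prodl in *; simpl. ring. rewrite IHl1; ring. Qed.
Lemma prodl_perm f l l' : Permutation l l' -> prodl f l = prodl f l'.
Proof.
  induction 1; unfold prodl in *; simpl; auto; [rewrite IHPermutation; auto | ring | congruence].
Qed.
Lemma prodl_repeat f i k : prodl f (repeat i k) = Cpow (f i) k.
Proof. induction k; unfold prodl in *; simpl; auto. rewrite IHk; auto. Qed.
Lemma prodl_ext_in f g l : (forall x, In x l -> f x = g x) -> prodl f l = prodl g l.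
Proof.
  induction l; intros H; unfold prodl in *; simpl; auto.
  rewrite H by (left; auto). rewrite IHl; auto. intros; apply H; right; auto.
Qed.
Lemma prodl_mul f g l : prodl (fun x => Cmul (f x) (g x)) l = Cmul (prodl f l) (prodl g l).
Proof. induction l; unfold prodl in *; simpl. ring. rewrite IHl; ring. Qed.
Lemma prodl_scal c y l : prodl (fun j => Cmul c (y j)) l = Cmul (Cpow c (length l)) (prodl y l).
Proof. induction l; unfold prodl in *; simpl. ring. rewrite IHl; ring. Qed.
Lemma prodl_map f g l : prodl f (map g l) = prodl (fun x => f (g x)) l.
Proof. induction l; unfold prodl in *; simpl; auto. rewrite IHl; auto. Qed.
Lemma prodl_const c l : prodl (fun _ => c) l = Cpow c (length l).
Proof. induction l; unfold prodl in *; simpl; auto. rewrite IHl; auto. Qed.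
Lemma prodl_zero f l x : In x l -> f x = C0 -> prodl f l = C0.
Proof.
  induction l; simpl. intros []. intros [->|H] Hf; unfold prodl in *; simpl.
  rewrite Hf; ring. rewrite IHl; auto; ring.
Qed.
Lemma Cabs_prodl_one f l : (forall x, In x l -> Cabs (f x) = 1) -> Cabs (prodl f l) = 1.
Proof.
  induction l; intros H; unfold prodl in *; simpl. apply Cabs_C1.
  rewrite Cabs_mul, H, IHl by (try (left; auto); intros; apply H; right; auto). ring.
Qed.
Lemma Im_prodl f l : (forall x, In x l -> Im (f x) = 0) -> Im (prodl f l) = 0.
Proof.
  induction l; intros H; unfold prodl in *; simpl. auto.
  apply Im_mul. apply H; left; auto. apply IHl; intros; apply H; right; auto.
Qed.

Lemma prodl_positions y js : prodl y js = prodl (fun t => y (nth t js 0%nat)) (seq 0 (length js)).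
Proof.
  induction js as [|j js IH]; simpl; auto. unfold prodl at 1; simpl; fold (prodl y js).
  rewrite IH, <- seq_shift, prodl_map. reflexivity.
Qed.

Definition asbool (P : Prop) : bool := if excluded_middle_informative P then true else false.

Lemma asboolE P : asbool P = true <-> P.
Proof. unfold asbool; destruct (excluded_middle_informative P); split; auto; discriminate. Qed.
Lemma asbool_ext (P Q : Prop) : (P <-> Q) -> asbool P = asbool Q.
Proof.
  intros H; unfold asbool.
  destruct (excluded_middle_informative P), (excluded_middle_informative Q); tauto.
Qed.

Lemma Csum_indicator {B} (L : list B) b0 (g : B -> Cx) : NoDup L -> In b0 L ->
  Csum (fun b => Cmul (Cr (if asbool (b0 = b) then 1 else 0)) (g b)) L = g b0.
Proof.
  induction 1 as [|a l0 Ha HL IH]; intros Hb; [destruct Hb|].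
  unfold Csum at 1; simpl.
  fold (Csum (fun b => Cmul (Cr (if asbool (b0 = b) then 1 else 0)) (g b)) l0).
  destruct (asbool (b0 = a)) eqn:E.
  - rewrite asboolE in E; subst a.
    rewrite (Csum_ext_in _ (fun _ => C0)), Csum_zero, Cr1 by
      (intros x Hx; destruct (asbool (b0 = x)) eqn:E2;
       [rewrite asboolE in E2; subst; tauto | rewrite Cr0; ring]).
    ring.
  - destruct Hb as [Hab|Hb].
    + subst a. assert (asbool (b0 = b0) = true) by (apply asboolE; auto). congruence.
    + rewrite IH, Cr0 by auto. ring.
Qed.

Lemma Csum_group {A B} (h : A -> B) (g : B -> Cx) (l : list A) (L : list B) :
  NoDup L -> (forall x, In x l -> In (h x) L) ->
  Csum (fun x => g (h x)) l =
  Csum (fun b => Cmul (Cr (INR (length (filter (fun x => asbool (h x = b)) l)))) (g b)) L.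
Proof.
  intros HL. induction l as [|x l IH]; intros Hh.
  - simpl. rewrite (Csum_ext_in _ (fun _ => C0)), Csum_zero by (intros; simpl; rewrite Cr0; ring).
    reflexivity.
  - unfold Csum at 1; simpl; fold (Csum (fun x => g (h x)) l).
    rewrite IH by (intros; apply Hh; right; auto).
    rewrite <- (Csum_indicator L (h x) g HL) by (apply Hh; left; auto).
    rewrite <- Csum_add. apply Csum_ext_in. intros b _. simpl.
    destruct (asbool (h x = b)); simpl length; try rewrite S_INR; rewrite ?Cr_add, ?Cr0, ?Cr1; ring.
Qed.

Lemma Rsum_group {A B} (h : A -> B) (g : B -> R) (l : list A) (L : list B) :
  NoDup L -> (forall x, In x l -> In (h x) L) ->
  Rsum (fun x => g (h x)) l =
  Rsum (fun b => INR (length (filter (fun x => asbool (h x = b)) l)) * g b) L.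
Proof.
  intros HL Hh. pose proof (Csum_group h (fun b => Cr (g b)) l L HL Hh) as E. cbv beta in E.
  rewrite Csum_Cr,
    (Csum_ext_in _ (fun b => Cr (INR (length (filter (fun x => asbool (h x = b)) l)) * g b))),
    Csum_Cr in E by (intros; symmetry; apply Cr_mul).
  apply (f_equal Re) in E. exact E.
Qed.

Lemma exp_le x y : x <= y -> exp x <= exp y.
Proof. intros [H|H]; [left; apply exp_increasing; auto | subst; lra]. Qed.
Lemma ln_le x y : 0 < x -> x <= y -> ln x <= ln y.
Proof. intros Hx [H|H]; [left; apply ln_increasing; auto | subst; lra]. Qed.

Lemma rpow_Rpower x y : 0 < x -> rpow x y = Rpower x y.
Proof. intros; unfold rpow; destruct (Rlt_dec 0 x); tauto. Qed.
Lemma rpow_0_l y : rpow 0 y = 0.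
Proof. unfold rpow; destruct (Rlt_dec 0 0); lra. Qed.
Lemma rpow_ge0 x y : 0 <= rpow x y.
Proof. unfold rpow; destruct (Rlt_dec 0 x); [left; apply exp_pos | lra]. Qed.
Lemma rpow_gt0 x y : 0 < x -> 0 < rpow x y.
Proof. intros; rewrite rpow_Rpower by auto; apply exp_pos. Qed.
Lemma rpow_1 x : 0 <= x -> rpow x 1 = x.
Proof.
  intros H. destruct (Req_dec x 0). subst; apply rpow_0_l.
  rewrite rpow_Rpower by lra. apply Rpower_1; lra.
Qed.
Lemma rpow_plus x y z : 0 < x -> rpow x (y + z) = rpow x y * rpow x z.
Proof. intros; rewrite !rpow_Rpower by auto. apply Rpower_plus. Qed.
Lemma rpow_mul a b y : 0 <= a -> 0 <= b -> rpow (a * b) y = rpow a y * rpow b y.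
Proof.
  intros Ha Hb. destruct (Req_dec a 0). subst. rewrite Rmult_0_l, !rpow_0_l; ring.
  destruct (Req_dec b 0). subst. rewrite Rmult_0_r, !rpow_0_l; ring.
  rewrite !rpow_Rpower by nra. rewrite Rpower_mult_distr; auto; lra.
Qed.
Lemma rpow_rpow x y z : 0 <= x -> rpow (rpow x y) z = rpow x (y * z).
Proof.
  intros Hx. destruct (Req_dec x 0). subst. rewrite !rpow_0_l; auto.
  rewrite (rpow_Rpower x), rpow_Rpower, rpow_Rpower by (try apply exp_pos; lra).
  apply Rpower_mult.
Qed.
Lemma rpow_inv x e : 0 < x -> rpow (/ x) e = rpow x (- e).
Proof.
  intros Hx. rewrite !rpow_Rpower by (try apply Rinv_0_lt_compat; auto). unfold Rpower.
  rewrite ln_Rinv by auto. f_equal; ring.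
Qed.

Lemma rpow_le_base a b y : 0 <= y -> 0 <= a <= b -> rpow a y <= rpow b y.
Proof.
  intros Hy [Ha Hab]. destruct (Req_dec a 0). subst; rewrite rpow_0_l; apply rpow_ge0.
  rewrite !rpow_Rpower by lra. apply Rle_Rpower_l; lra.
Qed.
Lemma rpow_le_base_nonpos x y e : 0 < x <= y -> e <= 0 -> rpow y e <= rpow x e.
Proof.
  intros [Hx Hxy] He. rewrite !rpow_Rpower by lra. unfold Rpower.
  apply exp_le. enough (ln x <= ln y) by nra. apply ln_le; lra.
Qed.
Lemma rpow_le_1 x y : 0 <= y -> x <= 1 -> rpow x y <= 1.
Proof.
  intros Hy Hx. unfold rpow; destruct (Rlt_dec 0 x); [|lra]. unfold Rpower.
  rewrite <- exp_0. apply exp_le. enough (ln x <= 0) by nra.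
  rewrite <- ln_1. apply ln_le; lra.
Qed.
Lemma rpow_gt_1 x y : 0 < y -> 1 < x -> 1 < rpow x y.
Proof.
  intros Hy Hx. rewrite rpow_Rpower by lra. unfold Rpower. rewrite <- exp_0.
  apply exp_increasing. enough (0 < ln x) by nra.
  rewrite <- ln_1; apply ln_increasing; lra.
Qed.

(** Mean value theorem, comparing [c ^ (p - 1)] with [1] between [t] and [1]. *)
Lemma bernoulli_rpow p t : 1 <= p -> 0 <= t -> 1 + p * (t - 1) <= rpow t p.
Proof.
  intros Hp Ht. destruct (Req_dec t 0). subst. rewrite rpow_0_l. lra.
  rewrite rpow_Rpower by lra.
  assert (Hd : forall c, 0 < c -> derivable_pt_lim (fun x => Rpower x p) c (p * Rpower c (p - 1)))
    by (intros; apply derivable_pt_lim_power; auto).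
  assert (H1 : Rpower 1 p = 1) by (unfold Rpower; rewrite ln_1, Rmult_0_r, exp_0; auto).
  destruct (Rtotal_order t 1) as [Hlt|[Heq|Hgt]].
  - destruct (MVT_cor2 (fun x => Rpower x p) (fun c => p * Rpower c (p - 1)) t 1 Hlt)
      as [c [Hc1 Hc2]]; [intros c Hc; apply Hd; lra|].
    simpl in Hc1. rewrite H1 in Hc1.
    assert (Rpower c (p - 1) <= 1) by (rewrite <- (rpow_Rpower c) by lra; apply rpow_le_1; lra).
    assert (p * Rpower c (p - 1) <= p) by nra.
    nra.
  - subst. rewrite H1. lra.
  - destruct (MVT_cor2 (fun x => Rpower x p) (fun c => p * Rpower c (p - 1)) 1 t Hgt)
      as [c [Hc1 Hc2]]; [intros c Hc; apply Hd; lra|].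
    simpl in Hc1. rewrite H1 in Hc1.
    assert (1 <= Rpower c (p - 1)).
    { destruct (Req_dec p 1) as [->|Hp1].
      - replace (1 - 1) with 0 by ring. rewrite Rpower_O; lra.
      - rewrite <- (rpow_Rpower c) by lra. left; apply rpow_gt_1; lra. }
    assert (p <= p * Rpower c (p - 1)) by nra.
    nra.
Qed.

(** Bernoulli's inequality at the mean [b] gives [u ^ p >= b ^ p (1 + p (u / b - 1))];
    summing, the linear terms cancel. *)
Lemma power_mean_le {A} (u : A -> R) (l : list A) p :
  1 <= p -> (0 < length l)%nat -> (forall x, In x l -> 0 <= u x) ->
  rpow (/ INR (length l) * Rsum u l) p <= / INR (length l) * Rsum (fun x => rpow (u x) p) l.
Proof.
  intros Hp Hl Hu. set (k := INR (length l)).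
  assert (Hk : 0 < k) by (apply lt_0_INR; auto).
  set (b := / k * Rsum u l).
  assert (Hb : 0 <= b)
    by (apply Rmult_le_pos; [left; apply Rinv_0_lt_compat; auto | apply Rsum_nonneg; auto]).
  destruct (Req_dec b 0) as [Hb0|Hb0].
  { rewrite Hb0, rpow_0_l. apply Rmult_le_pos; [left; apply Rinv_0_lt_compat; auto|].
    apply Rsum_nonneg; intros; apply rpow_ge0. }
  assert (Hsum : Rsum (fun x => rpow b p * ((1 - p) + (p / b) * u x)) l
                 <= Rsum (fun x => rpow (u x) p) l).
  { apply Rsum_le. intros x Hx.
    replace (rpow (u x) p) with (rpow (b * (u x / b)) p) by (f_equal; field; lra).
    assert (Hub : 0 <= u x / b)
      by (apply Rmult_le_pos; [apply Hu; auto | left; apply Rinv_0_lt_compat; lra]).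
    rewrite rpow_mul by assumption.
    apply Rmult_le_compat_l; [apply rpow_ge0|].
    replace (1 - p + p / b * u x) with (1 + p * (u x / b - 1)) by (field; lra).
    apply bernoulli_rpow; auto. }
  rewrite <- Rsum_mul_l, Rsum_add, Rsum_const, <- Rsum_mul_l in Hsum. fold k in Hsum.
  assert (HS : Rsum u l = k * b) by (unfold b; field; lra).
  rewrite HS in Hsum. replace (k * (1 - p) + p / b * (k * b)) with k in Hsum by (field; lra).
  apply Rmult_le_reg_l with k; auto.
  rewrite <- Rmult_assoc, Rinv_r, Rmult_1_l by lra. lra.
Qed.

(** * Index tuples, multi-indices and permutations *)

Definition nsum {A} (f : A -> nat) (l : list A) : nat := list_sum (map f l).

Lemma nsum_ext {A} (f g : A -> nat) l : (forall x, In x l -> f x = g x) -> nsum f l = nsum g l.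
Proof. intros H; unfold nsum; f_equal; apply map_ext_in; auto. Qed.
Lemma nsum_zero {A} (l : list A) : nsum (fun _ => 0%nat) l = 0%nat.
Proof. induction l; unfold nsum in *; simpl; auto. Qed.
Lemma nsum_add {A} (f g : A -> nat) l :
  nsum (fun x => f x + g x)%nat l = (nsum f l + nsum g l)%nat.
Proof. induction l; unfold nsum in *; simpl; auto. rewrite IHl; lia. Qed.
Lemma nsum_if {A} (P : A -> Prop) c l :
  nsum (fun j => if asbool (P j) then c else 0%nat) l
  = (length (filter (fun j => asbool (P j)) l) * c)%nat.
Proof.
  induction l; unfold nsum in *; simpl; auto.
  destruct (asbool (P a)); simpl; rewrite IHl; lia.
Qed.
Lemma nsum_indicator n a :
  nsum (fun j => if Nat.eq_dec a j then 1%nat else 0%nat) (seq 0 n)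
  = if (a <? n)%nat then 1%nat else 0%nat.
Proof.
  induction n; [reflexivity|]. rewrite seq_S. unfold nsum in *.
  rewrite map_app, list_sum_app, IHn. simpl.
  destruct (Nat.eq_dec a n), (Nat.ltb_spec a n), (Nat.ltb_spec a (S n)); lia.
Qed.
Lemma nsum_ge_length {A} (f : A -> nat) l :
  (forall x, In x l -> (1 <= f x)%nat) -> (length l <= nsum f l)%nat.
Proof.
  induction l; unfold nsum in *; simpl; intros H; [lia|].
  specialize (H a (or_introl eq_refl)) as Ha.
  specialize (IHl (fun x Hx => H x (or_intror Hx))). lia.
Qed.
Lemma nsum_eq_length {A} (f : A -> nat) l : nsum f l = length l ->
  (forall x, In x l -> (1 <= f x)%nat) -> forall x, In x l -> f x = 1%nat.
Proof.
  induction l; intros Hs Hge x Hx; [destruct Hx|].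
  assert (1 <= f a)%nat by (apply Hge; left; auto).
  assert (length l <= nsum f l)%nat by (apply nsum_ge_length; intros; apply Hge; right; auto).
  unfold nsum in *; simpl in Hs. destruct Hx as [<-|Hx]; [lia|].
  apply IHl; auto; [lia | intros; apply Hge; right; auto].
Qed.

Lemma length_flat_map {A B} (g : A -> list B) l :
  length (flat_map g l) = nsum (fun x => length (g x)) l.
Proof. induction l; unfold nsum in *; simpl; auto. rewrite length_app, IHl; auto. Qed.
Lemma length_flat_map_cons {A : Type} (l : list A) (L : list (list A)) :
  length (flat_map (fun j => map (cons j) L) l) = (length l * length L)%nat.
Proof. induction l; simpl; auto. rewrite length_app, length_map, IHl; lia. Qed.
Lemma filter_flat_map {A B} (f : B -> bool) (g : A -> list B) l :
  filter f (flat_map g l) = flat_map (fun x => filter f (g x)) l.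
Proof. induction l; simpl; auto. rewrite filter_app, IHl; auto. Qed.
Lemma filter_map_cons {A} (f : list A -> bool) (j : A) L :
  filter f (map (cons j) L) = map (cons j) (filter (fun s => f (j :: s)) L).
Proof. induction L; simpl; auto. destruct (f (j :: a)); simpl; rewrite IHL; auto. Qed.
Lemma filter_false_nil {A} (f : A -> bool) l :
  (forall x, In x l -> f x = false) -> filter f l = [].
Proof.
  induction l; simpl; auto. intros H.
  rewrite H by (left; auto). apply IHl; intros; apply H; right; auto.
Qed.
Lemma NoDup_flat_map_cons {A : Type} (l : list A) (g : A -> list (list A)) :
  NoDup l -> (forall j, NoDup (g j)) -> NoDup (flat_map (fun j => map (cons j) (g j)) l).
Proof.
  induction 1 as [|a l Ha Hl IH]; intros Hg; simpl; [constructor|].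
  apply NoDup_app; auto.
  - apply FinFun.Injective_map_NoDup; [intros x y E; injection E; auto | apply Hg].
  - intros x Hx1 Hx2. apply in_map_iff in Hx1. destruct Hx1 as [y [<- _]].
    apply in_flat_map in Hx2. destruct Hx2 as [b [Hb Hb2]].
    apply in_map_iff in Hb2. destruct Hb2 as [z [E _]]. injection E; intros; subst; auto.
Qed.
Lemma nth_map_seq {B} (f : nat -> B) i m d : (i < m)%nat -> nth i (map f (seq 0 m)) d = f i.
Proof.
  intros H. rewrite (nth_indep _ _ (f 0%nat)) by (rewrite length_map, length_seq; auto).
  rewrite map_nth, seq_nth; auto.
Qed.
Lemma map_nth_seq (l : list nat) : map (fun i => nth i l 0%nat) (seq 0 (length l)) = l.
Proof.
  apply nth_ext with 0%nat 0%nat; rewrite length_map, length_seq; auto.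
  intros i Hi. rewrite nth_map_seq; auto.
Qed.
Lemma nth_map_nat {B} (f : nat -> B) l t d :
  (t < length l)%nat -> nth t (map f l) d = f (nth t l 0%nat).
Proof.
  intros H. rewrite (nth_indep _ _ (f 0%nat)) by (rewrite length_map; auto). apply map_nth.
Qed.

Lemma tuples_In n m js :
  In js (tuples n m) <-> length js = m /\ (forall x, In x js -> (x < n)%nat).
Proof.
  revert js; induction m; intros js; simpl.
  - split; [intros [<-|[]]; split; simpl; auto; intros x []|].
    intros [H _]; destruct js; [left; auto | discriminate].
  - rewrite in_flat_map. split.
    + intros [j [Hj Hm]]. apply in_map_iff in Hm. destruct Hm as [t [<- Ht]].
      apply IHm in Ht. apply in_seq in Hj. destruct Ht as [Ht1 Ht2].
      split; [simpl; auto|]. intros x [<-|Hx]; [lia | auto].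
    + intros [Hl Hx]. destruct js as [|j t]; [discriminate|]. exists j. split.
      * apply in_seq. specialize (Hx j (or_introl eq_refl)). lia.
      * apply in_map, IHm. split; [simpl in Hl; lia | intros; apply Hx; right; auto].
Qed.
Lemma tuples_NoDup n m : NoDup (tuples n m).
Proof.
  induction m; simpl; [constructor; auto; constructor|].
  apply NoDup_flat_map_cons; auto. apply seq_NoDup.
Qed.
Lemma tuples_length n m : length (tuples n m) = (n ^ m)%nat.
Proof. induction m; simpl; auto. rewrite length_flat_map_cons, length_seq, IHm; auto. Qed.

Lemma multi_In n m alpha : In alpha (multi n m) <-> length alpha = n /\ list_sum alpha = m.
Proof.
  revert m alpha; induction n; intros m alpha; cbn [multi].
  - destruct m; simpl; split.
    + intros [<-|[]]; auto.
    + intros [H1 H2]; destruct alpha; [left; auto | discriminate].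
    + intros [].
    + intros [H1 H2]; destruct alpha; discriminate.
  - rewrite in_flat_map. split.
    + intros [k [Hk Hm]]. apply in_map_iff in Hm. destruct Hm as [t [<- Ht]].
      apply IHn in Ht. apply in_seq in Hk. simpl. lia.
    + intros [Hl Hs]. destruct alpha as [|k t]; [discriminate|].
      unfold list_sum in *; simpl in Hl, Hs. exists k.
      split; [apply in_seq; lia | apply in_map, IHn; lia].
Qed.
Lemma multi_NoDup n m : NoDup (multi n m).
Proof.
  revert m; induction n; intros m; cbn [multi]; [destruct m; repeat constructor; auto|].
  apply NoDup_flat_map_cons; auto. apply seq_NoDup.
Qed.

(** [multiplicities n js] is the multi-index [alpha] with [x ^ alpha = x_(j_1) ... x_(j_m)]. *)
Definition multiplicities (n : nat) (js : list nat) : list nat :=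
  map (fun j => count_occ Nat.eq_dec js j) (seq 0 n).

Lemma length_multiplicities n js : length (multiplicities n js) = n.
Proof. unfold multiplicities; rewrite length_map, length_seq; auto. Qed.
Lemma nth_multiplicities n js j :
  (j < n)%nat -> nth j (multiplicities n js) 0%nat = count_occ Nat.eq_dec js j.
Proof. apply (nth_map_seq (fun j => count_occ Nat.eq_dec js j)). Qed.
Lemma list_sum_multiplicities n js :
  (forall x, In x js -> (x < n)%nat) -> list_sum (multiplicities n js) = length js.
Proof.
  induction js as [|a js IH]; intros H; unfold multiplicities in *; simpl.
  - apply (nsum_zero (seq 0 n)).
  - change (nsum (fun j => if Nat.eq_dec a j then S (count_occ Nat.eq_dec js j)
                           else count_occ Nat.eq_dec js j) (seq 0 n) = S (length js)).
    rewrite (nsum_ext _ (fun j => count_occ Nat.eq_dec js j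
                                  + (if Nat.eq_dec a j then 1 else 0))%nat)
      by (intros x _; destruct (Nat.eq_dec a x); lia).
    rewrite nsum_add, nsum_indicator.
    replace (nsum (count_occ Nat.eq_dec js) (seq 0 n)) with (length js)
      by (symmetry; apply IH; intros; apply H; right; auto).
    destruct (Nat.ltb_spec a n); [lia|]. specialize (H a (or_introl eq_refl)). lia.
Qed.
Lemma multiplicities_multi n m js : In js (tuples n m) -> In (multiplicities n js) (multi n m).
Proof.
  intros H; apply tuples_In in H; destruct H as [H1 H2]. apply multi_In.
  rewrite length_multiplicities, list_sum_multiplicities; auto.
Qed.
Lemma multiplicities_Permutation n l l' :
  Permutation l l' -> multiplicities n l = multiplicities n l'.
Proof.
  intros H. unfold multiplicities. apply map_ext.
  intros; apply (Permutation_count_occ Nat.eq_dec); auto.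
Qed.

Fixpoint expand_from (i : nat) (alpha : list nat) : list nat :=
  match alpha with [] => [] | k :: r => repeat i k ++ expand_from (S i) r end.
Definition expand alpha := expand_from 0 alpha.

Lemma expand_from_length i alpha : length (expand_from i alpha) = list_sum alpha.
Proof.
  revert i; induction alpha; intros i; simpl; auto.
  rewrite length_app, repeat_length, IHalpha; auto.
Qed.
Lemma expand_from_In i alpha x : In x (expand_from i alpha) -> (i <= x < i + length alpha)%nat.
Proof.
  revert i; induction alpha; intros i; simpl; [intros []|].
  intros H. apply in_app_or in H; destruct H as [H|H].
  - apply repeat_spec in H; lia.
  - apply IHalpha in H; lia.
Qed.
Lemma count_expand_from i alpha j : count_occ Nat.eq_dec (expand_from i alpha) j =
  if (i <=? j)%nat then nth (j - i) alpha 0%nat else 0%nat.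
Proof.
  revert i; induction alpha as [|k r IH]; intros i; simpl.
  - destruct (i <=? j)%nat; auto. destruct (j - i)%nat; auto.
  - rewrite count_occ_app, IH. destruct (Nat.eq_dec j i) as [->|Hji].
    + rewrite count_occ_repeat_eq, Nat.leb_refl, Nat.sub_diag by auto.
      destruct (Nat.leb_spec (S i) i); lia.
    + rewrite count_occ_repeat_neq by auto.
      destruct (Nat.leb_spec i j), (Nat.leb_spec (S i) j); try lia.
      replace (j - i)%nat with (S (j - S i)) by lia. auto.
Qed.
Lemma count_expand alpha j : count_occ Nat.eq_dec (expand alpha) j = nth j alpha 0%nat.
Proof. unfold expand; rewrite count_expand_from; simpl. rewrite Nat.sub_0_r; auto. Qed.

Lemma multiplicities_expand n alpha : length alpha = n -> multiplicities n (expand alpha) = alpha.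
Proof.
  intros Hl. apply nth_ext with 0%nat 0%nat; rewrite length_multiplicities; auto.
  intros j Hj. rewrite nth_multiplicities, count_expand by auto. reflexivity.
Qed.
Lemma expand_tuples n m alpha : In alpha (multi n m) -> In (expand alpha) (tuples n m).
Proof.
  intros H; apply multi_In in H; destruct H. apply tuples_In. split.
  - unfold expand; rewrite expand_from_length; auto.
  - intros x Hx; apply expand_from_In in Hx; lia.
Qed.
Lemma Permutation_expand n m js alpha : In js (tuples n m) -> In alpha (multi n m) ->
  multiplicities n js = alpha -> Permutation js (expand alpha).
Proof.
  intros Hjs Ha E. apply (Permutation_count_occ Nat.eq_dec). intros j.
  apply tuples_In in Hjs. apply multi_In in Ha. destruct Hjs as [_ Hjs], Ha as [Ha _].
  destruct (Nat.lt_ge_cases j n).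
  - rewrite <- (nth_multiplicities n) by auto. rewrite E, count_expand; auto.
  - rewrite (proj1 (count_occ_not_In _ _ _)), (proj1 (count_occ_not_In _ _ _)); auto.
    + intros Hx; apply expand_from_In in Hx; lia.
    + intros Hx; apply Hjs in Hx; lia.
Qed.

Definition perms (m : nat) := filter (fun s => asbool (NoDup s)) (tuples m m).

Lemma perms_In m s : In s (perms m) <-> In s (tuples m m) /\ NoDup s.
Proof. unfold perms; rewrite filter_In, asboolE; tauto. Qed.
Lemma perms_length_eq m s : In s (perms m) -> length s = m.
Proof. intros H; apply perms_In, proj1, tuples_In in H; tauto. Qed.
Lemma perms_Permutation m s : In s (perms m) -> Permutation s (seq 0 m).
Proof.
  intros H; apply perms_In in H; destruct H as [H1 H2].
  apply tuples_In in H1; destruct H1 as [H1 H3].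
  apply NoDup_Permutation_bis; auto; [rewrite length_seq; lia|].
  intros x Hx; apply in_seq; apply H3 in Hx; lia.
Qed.
Lemma In_perms m s i : In s (perms m) -> (i < m)%nat -> In i s.
Proof.
  intros H Hi. apply perms_Permutation in H.
  apply Permutation_in with (seq 0 m); [apply Permutation_sym; auto | apply in_seq; lia].
Qed.
Lemma nth_perms_lt m s t : In s (perms m) -> (t < m)%nat -> (nth t s 0%nat < m)%nat.
Proof.
  intros Hs Ht. apply perms_In, proj1, tuples_In in Hs. destruct Hs as [Hl Hs].
  apply Hs, nth_In; lia.
Qed.

Lemma remove_length_count (s : list nat) j :
  (length (remove Nat.eq_dec j s) + count_occ Nat.eq_dec s j)%nat = length s.
Proof.
  induction s as [|a s IH]; simpl; auto.
  destruct (Nat.eq_dec j a), (Nat.eq_dec a j); subst; simpl; try lia; congruence.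
Qed.

Lemma remove_NoDup (s : list nat) j : NoDup s -> NoDup (remove Nat.eq_dec j s).
Proof.
  induction 1; simpl; [constructor|]. destruct (Nat.eq_dec j x); auto.
  constructor; auto. intros Hx; apply in_remove in Hx; tauto.
Qed.

Lemma injective_cons_iff (s sg : list nat) j : In j s ->
  NoDup (j :: sg) /\ incl (j :: sg) s <-> NoDup sg /\ incl sg (remove Nat.eq_dec j s).
Proof.
  intros Hj. split.
  - intros [H1 H2]. inversion H1; subst. split; auto. intros x Hx.
    apply in_in_remove; [intros ->; auto | apply H2; right; auto].
  - intros [H1 H2]. split.
    + constructor; auto. intros Hj'. apply H2, in_remove in Hj'. tauto.
    + intros x [<-|Hx]; auto. apply H2, in_remove in Hx; tauto.
Qed.

Lemma count_injective_tuples n : forall k s, NoDup s -> length s = k ->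
  (forall x, In x s -> (x < n)%nat) ->
  length (filter (fun sg => asbool (NoDup sg /\ incl sg s)) (tuples n k)) = fact k.
Proof.
  induction k as [|k IH]; intros s Hs Hl Hn.
  - destruct s; [|discriminate]. simpl.
    replace (asbool _) with true; [reflexivity|].
    symmetry; apply asboolE. split; [constructor | intros x []].
  - cbn [tuples]. rewrite filter_flat_map, length_flat_map.
    rewrite (nsum_ext _ (fun j => if asbool (In j s) then fact k else 0%nat)).
    + rewrite nsum_if.
      assert (Hperm : Permutation (filter (fun j => asbool (In j s)) (seq 0 n)) s).
      { apply NoDup_Permutation; auto; [apply NoDup_filter, seq_NoDup|].
        intros x. rewrite filter_In, asboolE, in_seq.
        split; [tauto | intros Hx; split; auto; apply Hn in Hx; lia]. }
      rewrite (Permutation_length Hperm), Hl. simpl. lia.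
    + intros j Hj. rewrite filter_map_cons, length_map.
      destruct (asbool (In j s)) eqn:E; [rewrite asboolE in E|].
      * rewrite (filter_ext _ (fun sg => asbool (NoDup sg /\ incl sg (remove Nat.eq_dec j s))))
          by (intros sg; apply asbool_ext, injective_cons_iff; exact E).
        apply IH.
        -- apply remove_NoDup; auto.
        -- pose proof (remove_length_count s j) as Hc.
           rewrite (proj1 (NoDup_count_occ' Nat.eq_dec s) Hs j E) in Hc. lia.
        -- intros x Hx; apply in_remove in Hx; apply Hn; tauto.
      * rewrite filter_false_nil; [reflexivity|]. intros sg _.
        destruct (asbool (NoDup (j :: sg) /\ incl (j :: sg) s)) eqn:E2; auto.
        rewrite asboolE in E2. destruct E2 as [_ E2].
        assert (asbool (In j s) = true) by (apply asboolE, E2; left; auto). congruence.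
Qed.

Lemma perms_length m : length (perms m) = fact m.
Proof.
  unfold perms. rewrite <- (count_injective_tuples m m (seq 0 m));
    [| apply seq_NoDup | apply length_seq | intros x Hx; apply in_seq in Hx; lia].
  f_equal. apply filter_ext_in. intros sg Hsg. apply asbool_ext.
  apply tuples_In in Hsg. split; [|tauto]. intros; split; auto.
  intros x Hx; apply in_seq; apply Hsg in Hx; lia.
Qed.

(** The multinomial coefficient [m! / (alpha_1! ... alpha_n!)]. *)
Definition fiber_card n m alpha :=
  length (filter (fun js => asbool (multiplicities n js = alpha)) (tuples n m)).

(** Every such tuple is [expand alpha] rearranged by a permutation. *)
Lemma fiber_card_le_fact n m alpha : In alpha (multi n m) -> (fiber_card n m alpha <= fact m)%nat.
Proof.
  intros Ha. unfold fiber_card. set (r := expand alpha).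
  assert (Hr : length r = m)
    by (unfold r, expand; rewrite expand_from_length; apply multi_In in Ha; tauto).
  rewrite <- perms_length, <- (length_map (map (fun i => nth i r 0%nat)) (perms m)).
  apply NoDup_incl_length; [apply NoDup_filter, tuples_NoDup|].
  intros js Hjs. apply filter_In in Hjs. destruct Hjs as [Hjs E]. rewrite asboolE in E.
  pose proof (Permutation_expand n m js alpha Hjs Ha E) as HP. fold r in HP.
  rewrite <- (map_nth_seq r), Hr in HP.
  destruct (Permutation_map_inv _ _ HP) as [l3 [-> Hl3]].
  apply in_map, perms_In. split.
  - apply tuples_In. split.
    + apply Permutation_length in Hl3; rewrite length_seq in Hl3; auto.
    + intros x Hx. apply (Permutation_in _ (Permutation_sym Hl3)), in_seq in Hx; lia.
  - apply Permutation_NoDup with (seq 0 m); auto. apply seq_NoDup.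
Qed.

Lemma fiber_card_pos n m alpha : In alpha (multi n m) -> (1 <= fiber_card n m alpha)%nat.
Proof.
  intros Ha. unfold fiber_card.
  assert (Hin : In (expand alpha)
                  (filter (fun js => asbool (multiplicities n js = alpha)) (tuples n m))).
  { apply filter_In. split; [apply expand_tuples; auto|].
    apply asboolE, multiplicities_expand. apply multi_In in Ha; tauto. }
  destruct (filter _ _); [destruct Hin | simpl; lia].
Qed.

(** * The polar form of a homogeneous polynomial *)

Lemma monom_from_prodl i alpha x : monom_from i alpha x = prodl x (expand_from i alpha).
Proof.
  revert i; induction alpha; intros i; simpl; auto.
  rewrite prodl_app, prodl_repeat, IHalpha; auto.
Qed.

Lemma prodl_tuple_monom n m y js :
  In js (tuples n m) -> prodl y js = monom (multiplicities n js) y.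
Proof.
  intros H. unfold monom. rewrite monom_from_prodl. apply prodl_perm.
  apply (Permutation_expand n m); auto. apply multiplicities_multi; auto.
Qed.

Lemma poly_eval_scal n m a c y :
  poly_eval n m a (vscal c y) = Cmul (Cpow c m) (poly_eval n m a y).
Proof.
  unfold poly_eval. rewrite Csum_mul_l. apply Csum_ext_in. intros alpha Ha.
  unfold monom. rewrite !monom_from_prodl. unfold vscal. rewrite prodl_scal.
  rewrite expand_from_length. apply multi_In in Ha. destruct Ha as [_ ->]. ring.
Qed.

(** The coefficient [a_alpha] spread evenly over the [m]-tuples [js] whose monomial is
    [x ^ alpha]. *)
Definition sym_coeff n m (a : list nat -> Cx) js :=
  Cmul (Cr (/ INR (fiber_card n m (multiplicities n js)))) (a (multiplicities n js)).

Lemma poly_eval_tuples n m a y :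
  poly_eval n m a y = Csum (fun js => Cmul (sym_coeff n m a js) (prodl y js)) (tuples n m).
Proof.
  set (g := fun alpha => Cmul (Cr (/ INR (fiber_card n m alpha))) (Cmul (a alpha) (monom alpha y))).
  rewrite (Csum_ext_in _ (fun js => g (multiplicities n js)))
    by (intros js Hjs; unfold sym_coeff, g; rewrite (prodl_tuple_monom n m) by auto; ring).
  rewrite (Csum_group (multiplicities n) g (tuples n m) (multi n m) (multi_NoDup n m)
             (multiplicities_multi n m)).
  unfold poly_eval. apply Csum_ext_in. intros alpha Ha. fold (fiber_card n m alpha). unfold g.
  pose proof (le_INR _ _ (fiber_card_pos n m alpha Ha)) as H. simpl in H.
  rewrite Cr_mul_inv by lra. reflexivity.
Qed.

Definition zerov : vec := fun _ => C0.

Definition sign (e : nat) : Cx := if Nat.eqb e 0 then C1 else Cr (-1).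
Definition sign_prod m eps := prodl (fun i => sign (nth i eps 0%nat)) (seq 0 m).
Definition signed_comb m (eps : list nat) (X : list vec) : vec :=
  fun j => Csum (fun i => Cmul (sign (nth i eps 0%nat)) (nth i X zerov j)) (seq 0 m).

Lemma Cabs_sign e : Cabs (sign e) = 1.
Proof. unfold sign. destruct (Nat.eqb e 0); [apply Cabs_C1|]. rewrite Cabs_Cr, Rabs_left; lra. Qed.
Lemma Im_sign e : Im (sign e) = 0.
Proof. unfold sign. destruct (Nat.eqb e 0); reflexivity. Qed.

Lemma Csum_sign_pow c : Csum (fun e => Cpow (sign e) (S c)) (seq 0 2) = Cr (1 + (-1) ^ (S c)).
Proof.
  unfold Csum, sign; simpl. rewrite <- Cr1, !Cpow_Cr, pow1.
  apply Cx_ext; unfold Cr, Cadd, Cmul, C0; simpl; ring.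
Qed.

Fixpoint prod_at (F : nat -> nat -> Cx) (tau : list nat) : Cx :=
  match tau with [] => C1 | j :: t => Cmul (F 0%nat j) (prod_at (fun s => F (S s)) t) end.

Lemma prod_at_positions F tau :
  prod_at F tau = prodl (fun t => F t (nth t tau 0%nat)) (seq 0 (length tau)).
Proof.
  revert F; induction tau as [|j tau IH]; intros F; simpl; auto.
  rewrite IH, <- seq_shift, prodl_map. reflexivity.
Qed.

Lemma Csum_tuples_prod_at n L : forall F,
  Csum (prod_at F) (tuples n L) = prodl (fun t => Csum (F t) (seq 0 n)) (seq 0 L).
Proof.
  induction L; intros F; [unfold Csum, prodl; simpl; ring|].
  cbn [tuples]. rewrite Csum_flat_map.
  replace (seq 0 (S L)) with (0%nat :: map S (seq 0 L)) by (simpl; rewrite seq_shift; auto).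
  unfold prodl at 1; cbn [fold_right].
  fold (prodl (fun t => Csum (F t) (seq 0 n)) (map S (seq 0 L))).
  rewrite prodl_map, <- IHL, Csum_mul_r. apply Csum_ext_in. intros j _.
  rewrite Csum_map, Csum_mul_l. reflexivity.
Qed.

Lemma prodl_count_occ m f sg : (forall x, In x sg -> (x < m)%nat) ->
  prodl f sg = prodl (fun i => Cpow (f i) (count_occ Nat.eq_dec sg i)) (seq 0 m).
Proof.
  induction sg as [|j sg IH]; intros H.
  - simpl. rewrite prodl_const, Cpow_C1. reflexivity.
  - unfold prodl at 1; simpl; fold (prodl f sg). rewrite IH by (intros; apply H; right; auto).
    assert (Hj : In j (seq 0 m)) by (apply in_seq; specialize (H j (or_introl eq_refl)); lia).
    destruct (in_split _ _ Hj) as [l1 [l2 E]].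
    pose proof (seq_NoDup m 0) as Hnd. rewrite E in Hnd |- *. apply NoDup_remove_2 in Hnd.
    set (c := count_occ Nat.eq_dec sg).
    assert (Hother : forall l, incl l (l1 ++ l2) ->
      prodl (fun i => Cpow (f i) (if Nat.eq_dec j i then S (c i) else c i)) l
      = prodl (fun i => Cpow (f i) (c i)) l).
    { intros l Hl. apply prodl_ext_in. intros x Hx.
      destruct (Nat.eq_dec j x); [subst; exfalso; apply Hnd, Hl, Hx | reflexivity]. }
    rewrite !prodl_app. unfold prodl at 2 4; cbn [fold_right count_occ].
    fold (prodl (fun i => Cpow (f i) (c i)) l2).
    fold (prodl (fun i => Cpow (f i) (if Nat.eq_dec j i then S (c i) else c i)) l2).
    rewrite !Hother by (intros x Hx; apply in_or_app; auto).
    destruct (Nat.eq_dec j j); [simpl; ring | congruence].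
Qed.

Lemma not_NoDup_even_count m sg : In sg (tuples m m) -> ~ NoDup sg ->
  exists i, In i (seq 0 m) /\ Nat.Even (count_occ Nat.eq_dec sg i).
Proof.
  intros Hsg Hnd. apply tuples_In in Hsg. destruct Hsg as [Hl Hx].
  apply NNPP. intros Hn. apply Hnd.
  assert (Hodd : forall i, In i (seq 0 m) -> Nat.Odd (count_occ Nat.eq_dec sg i)).
  { intros i Hi. destruct (Nat.Even_or_Odd (count_occ Nat.eq_dec sg i)); eauto.
    exfalso; apply Hn; eauto. }
  (* all [m] counts are odd, hence [>= 1], and they sum to [m] *)
  assert (Hone : forall i, In i (seq 0 m) -> count_occ Nat.eq_dec sg i = 1%nat).
  { apply nsum_eq_length.
    - rewrite length_seq. transitivity (length sg); [|exact Hl].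
      exact (list_sum_multiplicities m sg Hx).
    - intros i Hi. destruct (Hodd i Hi) as [k Hk]. lia. }
  apply (NoDup_count_occ Nat.eq_dec). intros i. destruct (Nat.lt_ge_cases i m).
  - rewrite Hone; auto; apply in_seq; lia.
  - rewrite (proj1 (count_occ_not_In _ _ _)); auto. intros Hi; apply Hx in Hi; lia.
Qed.

(** The sum factors over the coordinates [i] as [sum_(e_i = +-1) e_i ^ (1 + #{t | sg_t = i})],
    which is [2] if [i] occurs exactly once in [sg] and [0] if it occurs an even number of times. *)
Lemma sign_average m sg : In sg (tuples m m) ->
  Csum (fun eps => Cmul (sign_prod m eps)
                        (prodl (fun t => sign (nth (nth t sg 0%nat) eps 0%nat)) (seq 0 m)))
       (tuples 2 m)
  = if asbool (NoDup sg) then Cr (2 ^ m) else C0.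
Proof.
  intros Hsg. pose proof Hsg as Hsg'. apply tuples_In in Hsg'. destruct Hsg' as [Hl Hx].
  rewrite (Csum_ext_in _ (prod_at (fun i e => Cpow (sign e) (S (count_occ Nat.eq_dec sg i))))).
  2:{ intros eps Heps. apply tuples_In in Heps. destruct Heps as [Hle _].
      rewrite prod_at_positions, Hle. unfold sign_prod.
      rewrite <- Hl, <- (prodl_positions (fun j => sign (nth j eps 0%nat)) sg), Hl.
      rewrite (prodl_count_occ m _ sg), <- prodl_mul by auto. reflexivity. }
  rewrite Csum_tuples_prod_at.
  rewrite (prodl_ext_in _ (fun i => Cr (1 + (-1) ^ (S (count_occ Nat.eq_dec sg i)))))
    by (intros; apply Csum_sign_pow).
  destruct (asbool (NoDup sg)) eqn:E.
  - rewrite asboolE in E.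
    rewrite (prodl_ext_in _ (fun _ => Cr 2)), prodl_const, Cpow_Cr, length_seq; auto.
    intros i Hi. apply in_seq in Hi.
    rewrite (proj1 (NoDup_count_occ' Nat.eq_dec sg) E i)
      by (apply (In_perms m); [apply perms_In; auto | lia]).
    f_equal. simpl. ring.
  - destruct (not_NoDup_even_count m sg Hsg) as [i [Hi [k Hk]]];
      [intros Hnd; apply asboolE in Hnd; congruence|].
    apply (prodl_zero _ _ i); auto. rewrite Hk, pow_1_odd, <- Cr0. f_equal; ring.
Qed.

Definition perm_term m (X : list vec) js sg :=
  prodl (fun t => nth (nth t sg 0%nat) X zerov (nth t js 0%nat)) (seq 0 m).

Lemma polarization_monomial m X js : length js = m ->
  Csum (fun eps => Cmul (sign_prod m eps) (prodl (signed_comb m eps X) js)) (tuples 2 m)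
  = Cmul (Cr (2 ^ m)) (Csum (perm_term m X js) (perms m)).
Proof.
  intros Hl.
  rewrite (Csum_ext_in _ (fun eps => Csum (fun sg => Cmul (perm_term m X js sg)
     (Cmul (sign_prod m eps) (prodl (fun t => sign (nth (nth t sg 0%nat) eps 0%nat)) (seq 0 m))))
     (tuples m m))).
  2:{ intros eps Heps. rewrite prodl_positions, Hl. unfold signed_comb.
      rewrite <- (Csum_tuples_prod_at m m
                    (fun t i => Cmul (sign (nth i eps 0%nat)) (nth i X zerov (nth t js 0%nat)))).
      rewrite Csum_mul_l. apply Csum_ext_in. intros sg Hsg.
      apply tuples_In in Hsg. destruct Hsg as [Hsl _].
      rewrite prod_at_positions, Hsl, prodl_mul. unfold perm_term. ring. }
  rewrite Csum_swap.
  rewrite (Csum_ext_in _ (fun sg => if asbool (NoDup sg)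
                                    then Cmul (Cr (2 ^ m)) (perm_term m X js sg) else C0))
    by (intros sg Hsg; rewrite <- Csum_mul_l, sign_average by auto;
        destruct (asbool (NoDup sg)); ring).
  unfold perms. rewrite Csum_filter, Csum_mul_l.
  apply Csum_ext_in; intros sg _; destruct (asbool (NoDup sg)); ring.
Qed.

(** The symmetric [m]-linear form [T] with [T(x, ..., x) = P(x)]: the symmetrization of
    [(x_1, ..., x_m) |-> sum_js sym_coeff js * x_1(j_1) * ... * x_m(j_m)]. *)
Definition polar_form n m a (X : list vec) : Cx :=
  Cmul (Cr (/ INR (fact m)))
       (Csum (fun js => Cmul (sym_coeff n m a js) (Csum (perm_term m X js) (perms m)))
             (tuples n m)).

Lemma polarization_identity n m a X :
  Csum (fun eps => Cmul (sign_prod m eps) (poly_eval n m a (signed_comb m eps X))) (tuples 2 m)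
  = Cmul (Cr (2 ^ m * INR (fact m))) (polar_form n m a X).
Proof.
  rewrite (Csum_ext_in _ (fun eps => Csum (fun js => Cmul (sym_coeff n m a js)
              (Cmul (sign_prod m eps) (prodl (signed_comb m eps X) js))) (tuples n m)))
    by (intros eps _; rewrite poly_eval_tuples, Csum_mul_l; apply Csum_ext_in; intros; ring).
  rewrite Csum_swap.
  rewrite (Csum_ext_in _ (fun js => Cmul (Cr (2 ^ m))
             (Cmul (sym_coeff n m a js) (Csum (perm_term m X js) (perms m))))).
  2:{ intros js Hjs. rewrite <- Csum_mul_l, polarization_monomial; [ring|].
      apply tuples_In in Hjs; tauto. }
  unfold polar_form. rewrite <- Csum_mul_l, Cr_mul.
  set (S := Csum _ (tuples n m)).
  rewrite <- (Cr_mul_inv (INR (fact m)) S) at 1 by (apply not_0_INR, fact_neq_0). ring.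
Qed.

(** * Values on unit vectors, multilinearity and norm of the polar form *)

Lemma prodl_nth_eqb (l1 l2 : list nat) m : length l1 = m -> length l2 = m ->
  prodl (fun t => if Nat.eqb (nth t l1 0%nat) (nth t l2 0%nat) then C1 else C0) (seq 0 m)
  = if asbool (l1 = l2) then C1 else C0.
Proof.
  intros H1 H2. destruct (asbool (l1 = l2)) eqn:E.
  - rewrite asboolE in E. subst.
    rewrite (prodl_ext_in _ (fun _ => C1)), prodl_const, Cpow_C1
      by (intros; rewrite Nat.eqb_refl; auto).
    reflexivity.
  - assert (Hdiff : exists t, (t < m)%nat /\ nth t l1 0%nat <> nth t l2 0%nat).
    { apply NNPP; intros Hn. assert (asbool (l1 = l2) = true) by
        (apply asboolE, nth_ext with 0%nat 0%nat; [congruence|];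
         intros t Ht; apply NNPP; intros Hne; apply Hn; exists t; split; auto; lia).
      congruence. }
    destruct Hdiff as [t [Ht Hne]]. apply (prodl_zero _ _ t); [apply in_seq; lia|].
    destruct (Nat.eqb_spec (nth t l1 0%nat) (nth t l2 0%nat)); congruence.
Qed.

Lemma perm_term_unitv m J js sg : length J = m -> length js = m -> In sg (perms m) ->
  perm_term m (map unitv J) js sg
  = Cr (if asbool (map (fun i => nth i J 0%nat) sg = js) then 1 else 0).
Proof.
  intros HJl Hjsl Hsg. pose proof (perms_length_eq m sg Hsg) as Hsl.
  unfold perm_term.
  rewrite (prodl_ext_in _ (fun t => if Nat.eqb (nth t js 0%nat)
                                       (nth t (map (fun i => nth i J 0%nat) sg) 0%nat)
                                    then C1 else C0)).
  - rewrite prodl_nth_eqb by (rewrite ?length_map; auto).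
    rewrite (asbool_ext _ (map (fun i => nth i J 0%nat) sg = js))
      by (split; intros; symmetry; auto).
    destruct (asbool _); reflexivity.
  - intros t Ht. apply in_seq in Ht. pose proof (nth_perms_lt m sg t Hsg ltac:(lia)).
    rewrite !nth_map_nat by (rewrite ?Hsl, ?HJl; lia). reflexivity.
Qed.

Lemma Permutation_map_nth_perm m (J sg : list nat) : length J = m -> In sg (perms m) ->
  Permutation (map (fun i => nth i J 0%nat) sg) J.
Proof.
  intros HJ Hs. apply perms_Permutation in Hs.
  transitivity (map (fun i => nth i J 0%nat) (seq 0 m)); [apply Permutation_map; auto|].
  rewrite <- HJ, map_nth_seq; auto.
Qed.

(** Only the [m!] pairs [(js, sg)] with [js] a rearrangement of [J] contribute, each with
    [sym_coeff js = sym_coeff J]. *)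
Lemma polar_form_unitv n m a J :
  In J (tuples n m) -> polar_form n m a (map unitv J) = sym_coeff n m a J.
Proof.
  intros HJ. pose proof HJ as HJ'. apply tuples_In in HJ'. destruct HJ' as [HJl HJx].
  unfold polar_form.
  rewrite (Csum_ext_in _ (fun js => Csum (fun sg => Cmul
     (Cr (if asbool (map (fun i => nth i J 0%nat) sg = js) then 1 else 0)) (sym_coeff n m a js))
     (perms m))).
  2:{ intros js Hjs. rewrite Csum_mul_l. apply Csum_ext_in. intros sg Hsg.
      rewrite perm_term_unitv; auto. ring. apply tuples_In in Hjs; tauto. }
  rewrite Csum_swap, (Csum_ext_in _ (fun sg => sym_coeff n m a J)).
  2:{ intros sg Hsg. pose proof (Permutation_map_nth_perm m J sg HJl Hsg) as HP.
      rewrite Csum_indicator; [| apply tuples_NoDup |].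
      - unfold sym_coeff. rewrite (multiplicities_Permutation n _ _ HP). reflexivity.
      - apply tuples_In. split.
        + rewrite (Permutation_length HP); auto.
        + intros x Hx. apply HJx, (Permutation_in _ HP), Hx. }
  rewrite Csum_const, perms_length.
  transitivity (Cmul (Cr (/ INR (fact m))) (Cmul (Cr (INR (fact m))) (sym_coeff n m a J)));
    [ring|].
  rewrite <- (Rinv_inv (INR (fact m))) at 2.
  apply Cr_mul_inv, Rinv_neq_0_compat, not_0_INR, fact_neq_0.
Qed.

Lemma prodl_linear_at (fw fy fz : nat -> Cx) c l t0 : NoDup l -> In t0 l ->
  (forall t, In t l -> t <> t0 -> fw t = fy t /\ fz t = fy t) ->
  fw t0 = Cadd (Cmul c (fy t0)) (fz t0) ->
  prodl fw l = Cadd (Cmul c (prodl fy l)) (prodl fz l).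
Proof.
  induction 1 as [|a l Ha Hl IH]; intros Ht0 Hoth Hw; [destruct Ht0|].
  unfold prodl; simpl; fold (prodl fw l) (prodl fy l) (prodl fz l).
  destruct (Nat.eq_dec a t0) as [->|Hne].
  - assert (Eq : forall f, (forall t, In t l -> t <> t0 -> f t = fy t) -> prodl f l = prodl fy l)
      by (intros f Hf; apply prodl_ext_in; intros t Ht; apply Hf; [auto | intros ->; auto]).
    rewrite (Eq fw), (Eq fz), Hw by (intros t Ht Htt; apply Hoth; [right|]; auto). ring.
  - destruct Ht0 as [->|Ht0]; [congruence|].
    destruct (Hoth a (or_introl eq_refl) Hne) as [E1 E2].
    rewrite IH, E1, E2; auto; [ring|]. intros; apply Hoth; auto; right; auto.
Qed.

Lemma nth_app_cons_other (l1 l2 : list vec) v v' k d : k <> length l1 ->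
  nth k (l1 ++ v :: l2) d = nth k (l1 ++ v' :: l2) d.
Proof.
  intros H. destruct (Nat.lt_ge_cases k (length l1)); [rewrite !app_nth1; auto|].
  rewrite !app_nth2 by auto. destruct (k - length l1)%nat eqn:E; [lia | reflexivity].
Qed.

(** The slot [length l1] is read at exactly one position [t0] of the permutation [sg]. *)
Lemma perm_term_linear m l1 l2 y z c js sg :
  (length l1 + S (length l2))%nat = m -> In sg (perms m) ->
  perm_term m (l1 ++ vadd (vscal c y) z :: l2) js sg =
  Cadd (Cmul c (perm_term m (l1 ++ y :: l2) js sg)) (perm_term m (l1 ++ z :: l2) js sg).
Proof.
  intros Hm Hsg. pose proof (perms_length_eq m sg Hsg) as Hsl.
  assert (Hnd : NoDup sg) by (apply perms_In in Hsg; tauto).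
  destruct (In_nth sg (length l1) 0%nat (In_perms m sg (length l1) Hsg ltac:(lia)))
    as [t0 [Ht0 Et0]].
  unfold perm_term. apply (prodl_linear_at _ _ _ c (seq 0 m) t0);
    [apply seq_NoDup | apply in_seq; lia | |].
  - intros t Ht Hne. apply in_seq in Ht.
    assert (nth t sg 0%nat <> length l1)
      by (intros E; apply Hne, (proj1 (NoDup_nth sg 0%nat) Hnd); lia || congruence).
    rewrite (nth_app_cons_other l1 l2 (vadd (vscal c y) z) y), (nth_app_cons_other l1 l2 z y);
      auto.
  - rewrite Et0, !nth_middle. reflexivity.
Qed.

Lemma polar_form_linear n m a l1 l2 y z c : (length l1 + S (length l2))%nat = m ->
  polar_form n m a (l1 ++ vadd (vscal c y) z :: l2) =
  Cadd (Cmul c (polar_form n m a (l1 ++ y :: l2))) (polar_form n m a (l1 ++ z :: l2)).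
Proof.
  intros Hm. unfold polar_form.
  rewrite (Csum_ext_in _ (fun js =>
    Cadd (Cmul c (Cmul (sym_coeff n m a js) (Csum (perm_term m (l1 ++ y :: l2) js) (perms m))))
         (Cmul (sym_coeff n m a js) (Csum (perm_term m (l1 ++ z :: l2) js) (perms m))))).
  - rewrite Csum_add, <- (Csum_mul_l c). ring.
  - intros js _.
    rewrite (Csum_ext_in _ (fun sg => Cadd (Cmul c (perm_term m (l1 ++ y :: l2) js sg))
                                          (perm_term m (l1 ++ z :: l2) js sg)))
      by (intros sg Hsg; apply perm_term_linear; auto).
    rewrite Csum_add, <- (Csum_mul_l c). ring.
Qed.

Lemma inK_Cr K r : inK K (Cr r).
Proof. destruct K; simpl; auto. Qed.
Lemma inK_sign K e : inK K (sign e).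
Proof. destruct K; simpl; auto using Im_sign. Qed.
Lemma inK_mul K z w : inK K z -> inK K w -> inK K (Cmul z w).
Proof. destruct K; simpl; auto. apply Im_mul. Qed.
Lemma inK_Csum {A} K (f : A -> Cx) l : (forall x, In x l -> inK K (f x)) -> inK K (Csum f l).
Proof. destruct K; simpl; auto using Im_Csum. Qed.
Lemma inK_prodl K f l : (forall x, In x l -> inK K (f x)) -> inK K (prodl f l).
Proof. destruct K; simpl; auto using Im_prodl. Qed.
Lemma isvec_coord K n x j : isvec K n x -> inK K (x j).
Proof.
  intros [H1 H2]. destruct (Nat.lt_ge_cases j n); [auto|]. rewrite H2 by auto. apply inK_Cr.
Qed.

Lemma polar_form_mlinear K n m a : (forall alpha, In alpha (multi n m) -> inK K (a alpha)) ->
  mlinear K n m (polar_form n m a).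
Proof.
  intros Ha. split.
  - intros X HX Hv. unfold polar_form.
    apply inK_mul; [apply inK_Cr|]. apply inK_Csum. intros js Hjs.
    apply inK_mul; [apply inK_mul; [apply inK_Cr | apply (Ha _ (multiplicities_multi _ _ _ Hjs))]|].
    apply inK_Csum. intros sg _. apply inK_prodl. intros t _.
    destruct (nth_in_or_default (nth t sg 0%nat) X zerov) as [Hin| ->]; [|apply inK_Cr].
    apply isvec_coord with n, Hv, Hin.
  - intros l1 l2 y z c Hm _ _ _ _ _. apply polar_form_linear; auto.
Qed.

Lemma lp_norm_le1_sum p n x : 0 < p -> lp_norm p n x <= 1 ->
  Rsum (fun j => rpow (Cabs (x j)) p) (seq 0 n) <= 1.
Proof.
  intros Hp H. unfold lp_norm in H.
  destruct (Rle_or_lt (Rsum (fun j => rpow (Cabs (x j)) p) (seq 0 n)) 1) as [|Hgt]; auto.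
  pose proof (rpow_gt_1 _ (1 / p) ltac:(apply Rdiv_lt_0_compat; lra) Hgt). lra.
Qed.

Section SignedCombinations.
Variables (K : field_kind) (n m : nat) (p : R) (X : list vec).
Hypothesis Hm : (1 <= m)%nat.
Hypothesis HXl : length X = m.
Hypothesis HX : forall x, In x X -> isvec K n x /\ lp_norm p n x <= 1.

Lemma nth_in_ball i : (i < m)%nat -> isvec K n (nth i X zerov) /\ lp_norm p n (nth i X zerov) <= 1.
Proof. intros Hi. apply HX, nth_In. lia. Qed.

Lemma signed_comb_isvec eps : isvec K n (signed_comb m eps X).
Proof.
  split.
  - intros j Hj. apply inK_Csum. intros i Hi. apply in_seq in Hi.
    apply inK_mul; [apply inK_sign|]. apply isvec_coord with n, nth_in_ball; lia.
  - intros j Hj. unfold signed_comb.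
    rewrite (Csum_ext_in _ (fun _ => C0)), Csum_zero; auto.
    intros i Hi. apply in_seq in Hi. destruct (nth_in_ball i ltac:(lia)) as [[_ H2] _].
    rewrite H2 by auto. ring.
Qed.

(** Coordinatewise, [|x_1(j) +- ... +- x_m(j)| / m] is at most the mean of the [|x_i(j)|],
    so by the power mean inequality its [p]-th power is at most the mean of the [|x_i(j)| ^ p]. *)
Lemma signed_comb_norm eps : 1 <= p ->
  lp_norm p n (vscal (Cr (/ INR m)) (signed_comb m eps X)) <= 1.
Proof.
  intros Hp. assert (HmR : 0 < / INR m) by (apply Rinv_0_lt_compat, lt_0_INR; lia).
  unfold lp_norm. apply rpow_le_1; [left; apply Rdiv_lt_0_compat; lra|].
  set (u := fun i j => Cabs (nth i X zerov j)).
  apply Rle_trans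
    with (Rsum (fun j => / INR m * Rsum (fun i => rpow (u i j) p) (seq 0 m)) (seq 0 n)).
  - apply Rsum_le. intros j _.
    apply Rle_trans with (rpow (/ INR m * Rsum (fun i => u i j) (seq 0 m)) p).
    + apply rpow_le_base; [lra|]. split; [apply Cabs_ge0|].
      unfold vscal, signed_comb. rewrite Cabs_mul, Cabs_Cr, Rabs_right by lra.
      apply Rmult_le_compat_l; [lra|].
      eapply Rle_trans; [apply Cabs_Csum|]. apply Rsum_le. intros i _.
      rewrite Cabs_mul, Cabs_sign. unfold u; lra.
    + pose proof (power_mean_le (fun i => u i j) (seq 0 m) p Hp) as Hj.
      rewrite length_seq in Hj. apply Hj; [lia | intros; apply Cabs_ge0].
  - rewrite <- Rsum_mul_l, Rsum_swap.
    apply Rle_trans with (/ INR m * Rsum (fun _ => 1) (seq 0 m)).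
    + apply Rmult_le_compat_l; [lra|]. apply Rsum_le. intros i Hi. apply in_seq in Hi.
      apply lp_norm_le1_sum; [lra | apply nth_in_ball; lia].
    + rewrite Rsum_const, length_seq. right. field. apply not_0_INR; lia.
Qed.

Lemma poly_signed_comb_bound a M eps : 1 <= p -> poly_bound K n p (poly_eval n m a) M ->
  Cabs (poly_eval n m a (signed_comb m eps X)) <= INR m ^ m * M.
Proof.
  intros Hp HP. assert (HmR : INR m <> 0) by (apply not_0_INR; lia).
  assert (E : signed_comb m eps X = vscal (Cr (INR m)) (vscal (Cr (/ INR m)) (signed_comb m eps X)))
    by (apply functional_extensionality; intros j; unfold vscal; rewrite Cr_mul_inv; auto).
  rewrite E, poly_eval_scal, Cabs_mul, Cpow_Cr, Cabs_Cr, Rabs_right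
    by (apply Rle_ge, pow_le, pos_INR).
  apply Rmult_le_compat_l; [apply pow_le, pos_INR|]. apply HP; [|apply signed_comb_norm; auto].
  split.
  - intros j Hj. apply inK_mul; [apply inK_Cr | apply isvec_coord with n, signed_comb_isvec].
  - intros j Hj. unfold vscal. rewrite (proj2 (signed_comb_isvec eps) j Hj). ring.
Qed.

End SignedCombinations.

(** From the polarization identity, [2 ^ m m! |T(X)| <= 2 ^ m m ^ m M]. *)
Lemma polar_form_bound K n m p a M : (1 <= m)%nat -> 1 <= p ->
  poly_bound K n p (poly_eval n m a) M ->
  mlin_bound K n m p (polar_form n m a) (INR m ^ m / INR (fact m) * M).
Proof.
  intros Hm Hp HP X HXl HX.
  assert (HF : 0 < INR (fact m)) by (apply lt_0_INR, lt_O_fact).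
  assert (H2 : 0 < 2 ^ m) by (apply pow_lt; lra).
  assert (Hb : Cabs (Cmul (Cr (2 ^ m * INR (fact m))) (polar_form n m a X))
               <= 2 ^ m * (INR m ^ m * M)).
  { rewrite <- polarization_identity. eapply Rle_trans; [apply Cabs_Csum|].
    apply Rle_trans with (Rsum (fun _ => INR m ^ m * M) (tuples 2 m)).
    - apply Rsum_le. intros eps _. rewrite Cabs_mul. unfold sign_prod.
      rewrite Cabs_prodl_one, Rmult_1_l by (intros; apply Cabs_sign).
      apply (poly_signed_comb_bound K n m p X); auto.
    - rewrite Rsum_const, tuples_length, pow_INR. replace (INR 2) with 2 by (simpl; lra). lra. }
  rewrite Cabs_mul, Cabs_Cr, Rabs_right in Hb by (apply Rle_ge, Rmult_le_pos; lra).
  apply Rmult_le_reg_l with (2 ^ m * INR (fact m)); [apply Rmult_lt_0_compat; lra|].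
  replace (2 ^ m * INR (fact m) * (INR m ^ m / INR (fact m) * M))
    with (2 ^ m * (INR m ^ m * M)) by (field; lra).
  exact Hb.
Qed.

(** * Comparing the coefficients *)

(** Each [alpha] accounts for [N = fiber_card n m alpha] equal terms [|a_alpha / N| ^ q] on the
    right, and [N ^ (1 - q) >= (m!) ^ (1 - q)] since [1 <= N <= m!] and [q >= 1]. *)
Lemma Rsum_tuples_sym_coeff_ge n m a q : 1 <= q ->
  rpow (INR (fact m)) (1 - q) * Rsum (fun alpha => rpow (Cabs (a alpha)) q) (multi n m)
  <= Rsum (fun js => rpow (Cabs (sym_coeff n m a js)) q) (tuples n m).
Proof.
  intros Hq.
  set (g := fun alpha => rpow (Cabs (Cmul (Cr (/ INR (fiber_card n m alpha))) (a alpha))) q).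
  change (Rsum (fun js => rpow (Cabs (sym_coeff n m a js)) q) (tuples n m))
    with (Rsum (fun js => g (multiplicities n js)) (tuples n m)).
  rewrite (Rsum_group (multiplicities n) g (tuples n m) (multi n m) (multi_NoDup n m)
             (multiplicities_multi n m)).
  rewrite Rsum_mul_l. apply Rsum_le. intros alpha Halpha. fold (fiber_card n m alpha). unfold g.
  pose proof (le_INR _ _ (fiber_card_pos n m alpha Halpha)) as H1.
  pose proof (le_INR _ _ (fiber_card_le_fact n m alpha Halpha)) as H2.
  simpl in H1. set (N := INR (fiber_card n m alpha)) in *.
  assert (HN : 0 < / N) by (apply Rinv_0_lt_compat; lra).
  rewrite Cabs_mul, Cabs_Cr, Rabs_right, rpow_mul, rpow_inv by (try apply Cabs_ge0; lra).
  replace (N * (rpow N (- q) * rpow (Cabs (a alpha)) q))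
    with (rpow N (1 + - q) * rpow (Cabs (a alpha)) q)
    by (rewrite rpow_plus, rpow_1 by lra; ring).
  apply Rmult_le_compat_r; [apply rpow_ge0|].
  apply rpow_le_base_nonpos; lra.
Qed.

(** With [q r = 1], the factor is [(F ^ (q - 1)) ^ r = F ^ (1 - r) = F / F ^ r]. *)
Lemma rpow_le_of_scaled_le F S S' q r B : 1 <= F -> 0 <= S -> 0 < r -> q * r = 1 ->
  rpow F (1 - q) * S <= S' -> rpow S' r <= B -> rpow S r <= F / rpow F r * B.
Proof.
  intros HF HS Hr Hqr HSS' HB.
  assert (HS' : 0 <= S')
    by (eapply Rle_trans; [|exact HSS']; apply Rmult_le_pos, HS; apply rpow_ge0).
  assert (HSle : S <= rpow F (q - 1) * S').
  { apply Rle_trans with (rpow F (q - 1) * (rpow F (1 - q) * S)).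
    - rewrite <- Rmult_assoc, <- rpow_plus by lra. replace (q - 1 + (1 - q)) with 0 by ring.
      rewrite rpow_Rpower, Rpower_O by lra. lra.
    - apply Rmult_le_compat_l; [apply rpow_ge0 | exact HSS']. }
  assert (HFr : 0 < rpow F r) by (apply rpow_gt0; lra).
  assert (E : rpow F ((q - 1) * r) = F / rpow F r).
  { apply Rmult_eq_reg_r with (rpow F r); [|lra]. rewrite <- rpow_plus by lra.
    replace ((q - 1) * r + r) with 1 by (rewrite Rmult_minus_distr_r, Hqr; ring).
    rewrite rpow_1 by lra. field; lra. }
  apply Rle_trans with (rpow (rpow F (q - 1) * S') r); [apply rpow_le_base; lra|].
  rewrite rpow_mul, rpow_rpow, E by (try apply rpow_ge0; lra).
  apply Rmult_le_compat_l; [left; apply Rdiv_lt_0_compat; lra | exact HB].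
Qed.

Theorem lemma1 (K : field_kind) (m : nat) (p : R) (Cmult : R) :
  (2 <= m)%nat -> INR m < p -> p < 2 * INR m ->
  mult_admissible K m p Cmult ->
  forall (n : nat) (a : list nat -> Cx) (M : R),
    (1 <= n)%nat ->
    (forall alpha, In alpha (multi n m) -> inK K (a alpha)) ->
    poly_bound K n p (poly_eval n m a) M ->
    rpow (Rsum (fun alpha => rpow (Cabs (a alpha)) (p / (p - INR m))) (multi n m))
         ((p - INR m) / p)
    <= Cmult * (INR m ^ m / rpow (INR (fact m)) ((p - INR m) / p)) * M.
Proof.
  intros Hm Hmp _ Hadm n a M Hn Ha HP.
  assert (HmR : 2 <= INR m) by (apply (le_INR 2); exact Hm).
  set (q := p / (p - INR m)). set (r := (p - INR m) / p). set (F := INR (fact m)).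
  assert (Hq : 1 <= q).
  { unfold q. apply Rmult_le_reg_r with (p - INR m); [lra|].
    unfold Rdiv. rewrite Rmult_assoc, Rinv_l; lra. }
  assert (HF : 1 <= F) by (apply (le_INR 1), lt_O_fact).
  assert (HFr : 0 < rpow F r) by (apply rpow_gt0; lra).
  pose proof (Hadm n (polar_form n m a) (INR m ^ m / F * M) Hn (polar_form_mlinear K n m a Ha)
                (polar_form_bound K n m p a M ltac:(lia) ltac:(lra) HP)) as Hmult.
  fold q r in Hmult.
  rewrite (Rsum_ext_in _ (fun js => rpow (Cabs (sym_coeff n m a js)) q)) in Hmult
    by (intros js Hjs; rewrite polar_form_unitv; auto).
  apply Rle_trans with (F / rpow F r * (Cmult * (INR m ^ m / F * M))).
  - set (S' := Rsum (fun js => rpow (Cabs (sym_coeff n m a js)) q) (tuples n m)).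
    apply (rpow_le_of_scaled_le F _ S' q r); auto.
    + apply Rsum_nonneg; intros; apply rpow_ge0.
    + unfold r; apply Rdiv_lt_0_compat; lra.
    + unfold q, r; field; lra.
    + apply Rsum_tuples_sym_coeff_ge; exact Hq.
  - right. field. split; lra.
Qed.
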